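(* Let $G$ be a graph, let $R$ be a general position set of $G$, and let $v\in R$. Then $|R|\le \mathrm{ip}(v,G)+1$. In particular, if $v$ is a gp-vertex of $G$, then $\mathrm{gp}(G)\le \mathrm{ip}(v,G)+1$.
   Context: All graphs are finite, simple and connected. A geodesic is a shortest path. A set $S$ of vertices is a general position set of $G$ if no three vertices of $S$ lie on a common geodesic of $G$; $\mathrm{gp}(G)$ is the maximum cardinality of a general position set, and a general position set of that cardinality is a gp-set. A gp-vertex of $G$ is a vertex lying in at least one gp-set of $G$. For $v\in V(G)$, $\mathrm{ip}(v,G)$ is the minimum number of geodesics of $G$, each having $v$ as an end-vertex, whose vertex sets together cover $V(G)$. *)

From mathcomp Require Import all_boot.
From mathcomp Require Import boolp.

Set Implicit Arguments.
Unset Strict Implicit.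
Unset Printing Implicit Defensive.

Definition simple_connected_graph (T : finType) (e : rel T) : Prop :=
  [/\ symmetric e, irreflexive e & forall x y : T, connect e x y].

Definition geodesic (T : finType) (e : rel T) (s : seq T) : Prop :=
  match s with
  | [::] => False
  | x :: p => path e x p /\
      forall q : seq T, path e x q -> last x q = last x p -> size p <= size q
  end.

Definition end_vertex (T : eqType) (v : T) (s : seq T) : Prop :=
  match s with
  | [::] => False
  | x :: p => x = v \/ last x p = v
  end.

Definition gp_set_prop (T : finType) (e : rel T) (S : {set T}) : Prop :=
  forall u v w : T, u \in S -> v \in S -> w \in S ->
    u != v -> v != w -> u != w ->
    ~ (exists s : seq T, geodesic e s /\ u \in s /\ v \in s /\ w \in s).

Definition gp_number (T : finType) (e : rel T) : nat :=
  \max_(S : {set T} | `[< gp_set_prop e S >]) #|S|.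

Definition is_gp_set (T : finType) (e : rel T) (S : {set T}) : Prop :=
  gp_set_prop e S /\ #|S| = gp_number e.

Definition gp_vertex (T : finType) (e : rel T) (v : T) : Prop :=
  exists S : {set T}, is_gp_set e S /\ v \in S.

Definition ip_cover (T : finType) (e : rel T) (v : T) (k : nat) : Prop :=
  exists gs : seq (seq T), size gs = k /\
    (forall g, g \in gs -> geodesic e g /\ end_vertex v g) /\
    (forall x : T, exists2 g, g \in gs & x \in g).

(* ip(v,G): the minimum such k (0 by convention if no such cover exists,
   which cannot happen for connected graphs). *)
Definition ip_number (T : finType) (e : rel T) (v : T) : nat :=
  match pselect (exists k, ip_cover e v k) with
  | left h =>
      @ex_minn (fun k => `[< ip_cover e v k >])
        (let: ex_intro k hk := h in ex_intro _ k (asboolT hk))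
  | right _ => 0
  end.

(* Every vertex lies on one of ip(v,G) geodesics having v as an end-vertex,
   and each of them passes through v. As R is in general position and
   v \in R, such a geodesic contains at most one vertex of R other than v;
   hence R minus v injects into the cover, and |R| - 1 <= ip(v,G). *)

From mathcomp Require Import all_boot.
From mathcomp Require Import boolp.

Set Implicit Arguments.
Unset Strict Implicit.
Unset Printing Implicit Defensive.

Section Geodesics.

Variables (T : finType) (e : rel T).

Lemma connect_geodesic (v x : T) :
  connect e v x -> exists2 p, geodesic e (v :: p) & last v p = x.
Proof.
move=> /connectP[p0 e_p0 x_p0].
pose walk n := `[< exists2 p, path e v p /\ last v p = x & size p = n >].
have walk_p0 : exists n, walk n by exists (size p0); apply/asboolP; exists p0.
case: (ex_minnP walk_p0) => n /asboolP[p [e_p x_p] <-] p_min.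
exists p => //; split=> // q e_q x_q.
by apply: p_min; apply/asboolP; exists q => //; rewrite x_q x_p.
Qed.

Lemma mem_end_vertex (v : T) (g : seq T) : end_vertex v g -> v \in g.
Proof. by case: g => [|x p] //= [->|<-]; rewrite ?mem_head ?mem_last. Qed.

Lemma ip_cover_exists (v : T) :
  (forall x, connect e v x) -> exists k, ip_cover e v k.
Proof.
move=> conn_v.
have /fin_all_exists[p geo_p] x : exists p, geodesic e (v :: p) /\ last v p = x.
  by have [p] := connect_geodesic (conn_v x); exists p.
exists #|T|, [seq v :: p x | x <- enum T]; split; first by rewrite size_map cardE.
split=> [_ /mapP[x _ ->]|x]; first by split; [case: (geo_p x) | left].
exists (v :: p x); first by apply: map_f; rewrite mem_enum.
by rewrite -[X in X \in _](proj2 (geo_p x)) mem_last.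
Qed.

Lemma ip_cover_ip_number (v : T) :
  (exists k, ip_cover e v k) -> ip_cover e v (ip_number e v).
Proof.
rewrite /ip_number => ex_cover; case: pselect => [[k k_cover]|//] /=.
by case: ex_minnP => m /asboolP.
Qed.

Lemma gp_set_geodesic_sparse (R : {set T}) (v : T) (g : seq T) :
  gp_set_prop e R -> v \in R -> geodesic e g -> v \in g ->
  {in R :\ v &, forall x y, x \in g -> y \in g -> x = y}.
Proof.
move=> gpR vR geo_g vg x y; rewrite !inE => /andP[xv xR] /andP[yv yR] xg yg.
apply/eqP/negP => /negP xy.
by apply: (gpR v x y) => //; rewrite 1?eq_sym //; exists g.
Qed.

End Geodesics.

Lemma card_le_size_cover (T : finType) (A : {set T}) (gs : seq (seq T)) :
  (forall x, x \in A -> exists2 g, g \in gs & x \in g) ->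
  {in gs, forall g, {in A &, forall x y, x \in g -> y \in g -> x = y}} ->
  #|A| <= size gs.
Proof.
move=> cover sparse.
pose idx x := find (fun g => x \in g) gs.
have has_A x : x \in A -> has (fun g => x \in g) gs.
  by move=> /cover[g gs_g xg]; apply/hasP; exists g.
have mem_idx x : x \in A -> x \in nth [::] gs (idx x).
  by move=> /has_A; apply: nth_find.
have idx_lt x : x \in A -> idx x < size gs by move=> /has_A; rewrite has_find.
rewrite cardE -(size_map idx) -(size_iota 0 (size gs)).
apply: uniq_leq_size => [|_ /mapP[x xA ->]]; last by move: xA; rewrite mem_enum mem_iota add0n => /idx_lt.
rewrite map_inj_in_uniq ?enum_uniq // => x y; rewrite !mem_enum => xA yA idx_xy.
apply: (sparse (nth [::] gs (idx x))) => //; rewrite ?mem_nth ?idx_lt ?mem_idx //.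
by rewrite idx_xy mem_idx.
Qed.

Theorem theorem3p3 (T : finType) (e : rel T) :
  simple_connected_graph e ->
  (forall (R : {set T}) (v : T), gp_set_prop e R -> v \in R ->
     #|R| <= ip_number e v + 1) /\
  (forall v : T, gp_vertex e v -> gp_number e <= ip_number e v + 1).
Proof.
case=> _ _ conn.
have gp_le_ip (R : {set T}) (v : T) :
    gp_set_prop e R -> v \in R -> #|R| <= ip_number e v + 1.
  move=> gpR vR.
  have [gs [<- [geo_gs cover]]] := ip_cover_ip_number (ip_cover_exists (conn v)).
  rewrite (cardsD1 v R) vR addnC leq_add2r.
  apply: card_le_size_cover => [x _|g /geo_gs[geo_g /mem_end_vertex vg]]; first exact: cover.
  exact: (gp_set_geodesic_sparse gpR vR geo_g vg).
split=> // v [S [[gpS <-] vS]].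
exact: gp_le_ip.
Qed.
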